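(* Let $\mathcal{T}=(\mathcal{V},\mathcal{E})$ obey the LC-PF model and covariance assumption of the context, with $\Omega_p(c,c)+\Omega_q(c,c)>0$ for every non-root node $c$. Let $\mathcal{M}$ be a set of missing non-root nodes such that every missing node has degree greater than $2$ and any two missing nodes are at distance greater than two (in hops) in $\mathcal{T}$. Let $\mathcal{O}=\mathcal{V}\setminus\mathcal{M}$, and let $\mathcal{T}_{\mathcal{M}}$ be the minimum weight spanning tree of the complete graph on $\mathcal{O}$ with edge weights $\phi$. Let $b\in\mathcal{M}$ have (observed) parent $a$ and (observed) set of children $\mathcal{C}_b$. Let $c^*\in\arg\min_{c_i\in\mathcal{C}_b}\phi_{bc_i}$. Then: (i) no edge $(c_ic_j)$ with $c_i,c_j\in\mathcal{C}_b\setminus\{c^*\}$ exists in $\mathcal{T}_{\mathcal{M}}$; (ii) with $\mathcal{C}_b^1=\{c_i\in\mathcal{C}_b:\phi_{ac_i}<\phi_{c^*c_i}\}$, each node of $\mathcal{C}_b^1$ is connected to $a$ in $\mathcal{T}_{\mathcal{M}}$, and each node of $\mathcal{C}_b\setminus(\mathcal{C}_b^1\cup\{c^*\})$ is connected to $c^*$ in $\mathcal{T}_{\mathcal{M}}$.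
   Context: $\mathcal{T}=(\mathcal{V},\mathcal{E})$ is a tree with a distinguished root (substation) of degree one. Each edge $(ab)$ has resistance $r_{ab}>0$ and reactance $x_{ab}>0$. For a node $a$, $\mathcal{P}^a$ is the set of edges on the path from $a$ to the root. If $\mathcal{P}^b\subseteq\mathcal{P}^a$ and $(ab)\in\mathcal{E}$, then $b$ is the parent of $a$ and $a$ is a child of $b$. Let $H_{1/r},H_{1/x}$ be the weighted Laplacians with edge weights $1/r_{ab}$, $1/x_{ab}$, with the root row and column removed. Non-root nodes have random injections $p_a,q_a$. The LC-PF model gives $v=H_{1/r}^{-1}p+H_{1/x}^{-1}q$ and $\theta=H_{1/x}^{-1}p-H_{1/r}^{-1}q$; the root voltage is constant. Covariance assumption: $\Omega_p,\Omega_q$ are the covariances of $p,q$, and $\Omega_{pq}=\mathbb{E}[(p-\mathbb{E}p)(q-\mathbb{E}q)^T]=\Omega_{qp}^T$. For distinct non-root $a,b$, $\Omega_p(a,b)=\Omega_q(a,b)=\Omega_{qp}(a,b)=0$, and $\Omega_{qp}(a,a)\ge0$. Define $\phi_{ab}=\mathbb{E}[((v_a-\mathbb{E}v_a)-(v_b-\mathbb{E}v_b))^2]$. *)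

From HB Require Import structures.
From mathcomp Require Import all_boot all_order all_algebra.
From mathcomp Require Import boolp classical_sets reals ereal measure.
From mathcomp Require Import lebesgue_integral hoelder random_variable.

Set Implicit Arguments.
Unset Strict Implicit.
Unset Printing Implicit Defensive.

Import Order.TTheory GRing.Theory Num.Theory.
Local Open Scope ring_scope.

(* Nodes of the tree are 'I_n.+1; the root (substation) is ord0 and the
   non-root nodes are indexed by 'I_n through  lift ord0 : 'I_n -> 'I_n.+1. *)

Section Graphs.
Variable V : finType.

Fixpoint hopball (e : rel V) (k : nat) (x : V) : {set V} :=
  if k is k'.+1 then hopball e k' x :|: [set z | [exists y in hopball e k' x, e y z]]
  else [set x].

Definition hopdist (e : rel V) (x y : V) : nat :=
  find (fun k => y \in hopball e k x) (iota 0 #|V|.+1).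

Definition deg (e : rel V) (x : V) : nat := #|[set y | e x y]|.

(* [is_tree_on S T] : the simple undirected graph with (symmetric) edge
   relation T is a tree with vertex set S: every edge joins two distinct
   vertices of S, the graph is connected on S, and it has #|S| - 1 edges
   (each undirected edge is counted twice as an ordered pair). *)
Definition is_tree_on (S : {set V}) (T : rel V) : Prop :=
  [/\ symmetric T, irreflexive T,
      (forall x y, T x y -> (x \in S) && (y \in S)),
      (forall x y, x \in S -> y \in S -> connect T x y) &
      #|[set u : V * V | T u.1 u.2]| = (#|S| - 1).*2 ]%N.

End Graphs.

Section Tree.
Variable n : nat.
Local Notation V := 'I_n.+1.
Definition substation : V := ord0.
End Tree.
Arguments substation {n}.
Section Tree2.
Variable n : nat.
Local Notation V := 'I_n.+1.

(* parent / children w.r.t. the substation: b is the parent of a iff (ab) is an edge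
   and b is closer to the substation, i.e. P^b is included in P^a. *)
Definition is_parent (e : rel V) (b a : V) : bool :=
  e a b && (hopdist e b substation < hopdist e a substation)%N.

Definition children (e : rel V) (b : V) : {set V} :=
  [set c | is_parent e b c].

(* weighted Laplacian with edge weights w, substation row and column removed *)
Definition redLap (R : ringType) (e : rel V) (w : V -> V -> R) : matrix R n n :=
  \matrix_(i, j)
    (if i == j then \sum_(k : V | e (lift ord0 i) k) w (lift ord0 i) k
     else if e (lift ord0 i) (lift ord0 j) then - w (lift ord0 i) (lift ord0 j)
     else 0).
End Tree2.

Section LCPF.
Context {d : measure_display} {Tm : measurableType d} {R : realType}.
Variable (P : probability Tm R) (n : nat).
Variables (e : rel 'I_n.+1) (r x : 'I_n.+1 -> 'I_n.+1 -> R).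
Variables (p q : 'I_n -> Tm -> R) (v0 : R).

Definition H_r : matrix R n n := redLap e (fun a b => (r a b)^-1).
Definition H_x : matrix R n n := redLap e (fun a b => (x a b)^-1).

Definition voltage (a : 'I_n.+1) : Tm -> R := fun w =>
  match unlift ord0 a with
  | Some i => \sum_j (invmx H_r i j * p j w + invmx H_x i j * q j w)
  | None => v0
  end.

Definition phi (a b : 'I_n.+1) : \bar R :=
  'E_P[fun w => ((voltage a w - fine 'E_P[voltage a])
                 - (voltage b w - fine 'E_P[voltage b])) ^+ 2].
End LCPF.

(* weight of a graph T (each undirected edge counted once) *)
Definition tree_weight (R : realType) (n : nat) (w : 'I_n.+1 -> 'I_n.+1 -> \bar R)
  (T : rel 'I_n.+1) : \bar R :=
  (\sum_(a : 'I_n.+1) \sum_(b : 'I_n.+1 | T a b && (a < b)%N) w a b)%E.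

Definition is_MST (R : realType) (n : nat) (S : {set 'I_n.+1})
  (w : 'I_n.+1 -> 'I_n.+1 -> \bar R) (T : rel 'I_n.+1) : Prop :=
  is_tree_on S T /\
  (forall T' : rel 'I_n.+1, is_tree_on S T' -> (tree_weight w T <= tree_weight w T')%E).

From HB Require Import structures.
From mathcomp Require Import all_boot all_order all_algebra.
From mathcomp Require Import boolp classical_sets reals ereal measure.
From mathcomp Require Import lebesgue_integral hoelder random_variable.
From mathcomp Require Import functions zify ring.
Import Order.TTheory GRing.Theory Num.Theory.

Set Implicit Arguments.
Unset Strict Implicit.
Unset Printing Implicit Defensive.

Local Open Scope ring_scope.

(* The inverse of the reduced Laplacian with edge weights 1/r has (y, j) entry
   the resistance shared by the root paths of y and j.  Hence v_u - v_w is a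
   combination of the injections in which p_j and q_j enter through the
   resistance and reactance of the edges of the u-w path that also lie on the
   root path of j, all with the same sign; with uncorrelated injections and
   Cov(q_j, p_j) >= 0, phi(u, w) is a sum over j of nonnegative quadratic forms
   in these two coefficients.  So phi shrinks when an endpoint moves towards
   the other along the tree path, and for two children c_i, c_j of b, which
   see disjoint injections across their parent edges,
   phi(c_i, c_j) = phi(c_i, b) + phi(b, c_j).
   If b is missing, every observed pair (u, v) with u in the subtree of a
   child c_i and v outside it costs at least phi(c_i, a) or phi(c_i, c_j) for
   a sibling c_j, and phi(c_i, c_j) >= phi(c_i, cstar); the cut and cycle
   properties of the unique minimum spanning tree then force the stated
   edges. *)

Section Graphs.
Variable V : finType.
Implicit Types (G T : rel V) (S : {set V}).

Lemma hopballP G k x z : z \in hopball G k x <->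
  exists p, [/\ path G x p, last x p = z & (size p <= k)%N].
Proof.
elim: k z => [|k IH] z /=.
  rewrite inE; split=> [/eqP ->|[[|y p] [_ <- //]]]; first by exists [::].
split.
  rewrite inE => /orP[/IH [p [Hp Hl Hs]]|].
    by exists p; split => //; rewrite (leq_trans Hs).
  rewrite inE => /existsP [y /andP [/IH [p [Hp Hl Hs]] Hyz]].
  exists (rcons p z); rewrite rcons_path Hp Hl Hyz last_rcons size_rcons.
  by split.
move=> [p [Hp Hl Hs]]; rewrite inE.
case: (leqP (size p) k) => Hk.
  by apply/orP; left; apply/IH; exists p.
move: Hp Hl Hs Hk; case/lastP: p => [//|p y].
rewrite rcons_path last_rcons size_rcons ltnS => /andP [Hp Hy] <- Hs _.
apply/orP; right; rewrite inE; apply/existsP; exists (last x p).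
by rewrite Hy andbT; apply/IH; exists p.
Qed.

Lemma edge_hopball G k x y : G x y -> y \in hopball G k.+1 x.
Proof. by move=> Gxy; apply/hopballP; exists [:: y]; rewrite /= Gxy. Qed.

Lemma hopdist_le_size G y z p : path G y p -> last y p = z ->
  (hopdist G y z <= size p)%N.
Proof.
move=> Hp Hl; rewrite /hopdist.
have Hin : z \in hopball G (size p) y by apply/hopballP; exists p.
case: (ltnP (size p) #|V|.+1) => Hs.
  rewrite leqNgt; apply/negP => Hlt.
  by have := before_find 0%N Hlt; rewrite nth_iota // add0n Hin.
by apply: leq_trans Hs; rewrite -[X in (_ <= X)%N](size_iota 0 #|V|.+1) find_size.
Qed.

Lemma shortest_path G y z : connect G y z ->
  exists p, [/\ path G y p, last y p = z & size p = hopdist G y z].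
Proof.
move/connectP => [p0 Hp0 {z}->]; case: (shortenP Hp0) => p Hp Hu _.
set z := last y p.
have Hsz : (size p < #|V|.+1)%N.
  by have := max_card (mem (y :: p)); rewrite (card_uniqP Hu) /=; lia.
have Hhas : has (fun k => z \in hopball G k y) (iota 0 #|V|.+1).
  apply/hasP; exists (size p); first by rewrite mem_iota.
  by apply/hopballP; exists p.
have Hf : (hopdist G y z < #|V|.+1)%N.
  by rewrite /hopdist -[X in (_ < X)%N](size_iota 0 #|V|.+1) -has_find.
have := nth_find 0%N Hhas; rewrite nth_iota // add0n -/(hopdist G y _).
move=> /hopballP [p' [Hp' Hl' Hs']].
by exists p'; split => //; apply/eqP; rewrite eqn_leq hopdist_le_size // Hs'.
Qed.

Lemma hopdist_eq0 G y z : connect G y z -> hopdist G y z = 0%N -> y = z.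
Proof. by move/shortest_path => [[|? ?] [_ <- <-]]. Qed.

Lemma hopdistxx G z : hopdist G z z = 0%N.
Proof. by apply/eqP; rewrite -leqn0; apply: (@hopdist_le_size G z z [::]). Qed.

Lemma hopdist_edge G y y' z : G y y' -> connect G y' z ->
  (hopdist G y z <= (hopdist G y' z).+1)%N.
Proof.
move=> Hyy' /shortest_path [p [Hp Hl <-]].
by apply: (@hopdist_le_size G y z (y' :: p)); rewrite //= Hyy'.
Qed.

Lemma hopdist_step G y z : connect G y z -> y != z ->
  exists2 y', G y y' & (hopdist G y' z).+1 = hopdist G y z.
Proof.
move=> Hc Hyz; have [[|y' p] [/= Hp Hl Hs]] := shortest_path Hc.
  by rewrite -Hl eqxx in Hyz.
case/andP: Hp => Hyy' Hp; exists y' => //.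
have Hc' : connect G y' z by apply/connectP; exists p.
apply/eqP; rewrite eqn_leq hopdist_edge // andbT.
by rewrite -Hs ltnS hopdist_le_size.
Qed.

Definition edge_set G := [set u : V * V | G u.1 u.2].

(* Orienting each vertex other than [z] towards [z] injects [S :\ z] into the
   edge set twice, once per orientation. *)
Lemma connected_card_edge_set G S z : symmetric G -> z \in S ->
  (forall x y, G x y -> y \in S) -> (forall x, x \in S -> connect G x z) ->
  ((#|S| - 1).*2 <= #|edge_set G|)%N.
Proof.
move=> Gsym HzS GS Gcon.
pose dz y := hopdist G y z.
pose f y := odflt z [pick y' | G y y' && ((dz y').+1 == dz y)].
have Hf y : y \in S :\ z -> G y (f y) /\ (dz (f y)).+1 = dz y.
  rewrite !inE => /andP [Hyz HyS].
  have [y' Hyy' Hd] := hopdist_step (Gcon y HyS) Hyz.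
  rewrite /f; case: pickP => [? /andP [-> /eqP] //|/(_ y')].
  by rewrite Hyy' Hd eqxx.
pose A := [set (y, f y) | y in S :\ z].
pose B := [set (f y, y) | y in S :\ z].
have cA : #|A| = #|S :\ z| by apply: card_in_imset => ? ? _ _ [].
have cB : #|B| = #|S :\ z| by apply: card_in_imset => ? ? _ _ [].
have dAB : A :&: B = finset.set0.
  apply/setP => [[u v]]; rewrite !inE; apply/negP => /andP [].
  move=> /imsetP [y Hy [-> ->]] /imsetP [y' Hy' [Hyy' Hfy']].
  have [_ H1] := Hf y Hy; have [_ H2] := Hf y' Hy'.
  rewrite Hfy' in H1; rewrite -Hyy' in H2; lia.
have sub : A :|: B \subset edge_set G.
  apply/fintype.subsetP => u; rewrite !inE => /orP [] /imsetP [y Hy ->] /=;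
    by have [H _] := Hf y Hy; rewrite // Gsym.
have := subset_leq_card sub; rewrite cardsU dAB cards0 subn0 cA cB addnn.
by rewrite (cardsD1 z S) HzS add1n subn1.
Qed.

Definition del_edge T u v : rel V := fun x y =>
  T x y && ~~ (((x == u) && (y == v)) || ((x == v) && (y == u))).

Definition swap_edge T u v s t : rel V := fun x y =>
  del_edge T u v x y || ((x == s) && (y == t)) || ((x == t) && (y == s)).

Lemma del_edge_sym T u v : symmetric T -> symmetric (del_edge T u v).
Proof.
move=> Ts x y; rewrite /del_edge Ts; congr (_ && ~~ _).
by rewrite orbC (andbC (y == u)) (andbC (y == v)).
Qed.

Lemma del_edge_sub T u v : subrel (del_edge T u v) T.
Proof. by move=> x y /andP []. Qed.

Lemma connect_sub_swap_edge T u v s t x y :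
  connect (del_edge T u v) x y -> connect (swap_edge T u v s t) x y.
Proof. by apply: connect_sub => a b H; apply: connect1; rewrite /swap_edge H. Qed.

Lemma card_edge_set_del T u v : T u v -> u != v -> symmetric T ->
  #|edge_set (del_edge T u v)| = (#|edge_set T| - 2)%N.
Proof.
move=> Tuv Huv Ts.
have -> : edge_set (del_edge T u v) = edge_set T :\: [set (u, v); (v, u)].
  apply/setP => [[y z]]; rewrite !inE /del_edge /= !xpair_eqE andbC.
  by rewrite !negb_or.
rewrite cardsD; congr (_ - _)%N.
have -> : edge_set T :&: [set (u, v); (v, u)] = [set (u, v); (v, u)].
  apply/finset.setIidPr/fintype.subsetP => y; rewrite !inE => /orP [] /eqP -> //=.
  by rewrite Ts.
by rewrite cards2 xpair_eqE (negbTE Huv).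
Qed.

Lemma tree_on_neq S T u v : is_tree_on S T -> T u v -> u != v.
Proof. by case=> _ Ti _ _ _ Tuv; apply: contraTneq Tuv => ->; rewrite Ti. Qed.

(* Without the edge, a connected graph on [S] would need [2 (|S| - 1)] ordered
   edges but only has [2 (|S| - 1) - 2]. *)
Lemma tree_del_edge_disconnected S T u v : is_tree_on S T -> T u v ->
  ~~ connect (del_edge T u v) u v.
Proof.
move=> Htree Tuv; have Huv := tree_on_neq Htree Tuv.
case: Htree => Ts Ti TS Tc Tn; apply/negP => Hc.
set T0 := del_edge T u v.
have T0s : symmetric T0 by apply: del_edge_sym.
have /andP [HuS HvS] := TS _ _ Tuv.
have Hcon x : x \in S -> connect T0 x u.
  move=> Hx; apply: (connect_sub _ (Tc x u Hx HuS)) => y z Hyz.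
  case Hr : (((y == u) && (z == v)) || ((y == v) && (z == u))).
    by case/orP: Hr => /andP [/eqP -> /eqP ->]; rewrite // (sym_connect_sym T0s).
  by apply: connect1; rewrite /T0 /del_edge Hyz Hr.
have := connected_card_edge_set T0s HuS _ Hcon.
rewrite card_edge_set_del // Tn.
have H2 : (2 <= #|S|)%N.
  by rewrite (cardsD1 u) HuS (cardsD1 v) !inE eq_sym Huv HvS.
move=> /(_ (fun y z H => (andP (TS y z (del_edge_sub H))).2)); lia.
Qed.

Lemma swap_edge_tree S T u v s t : is_tree_on S T -> T u v -> ~~ T s t ->
  s != t -> s \in S -> t \in S ->
  connect (del_edge T u v) u s -> connect (del_edge T u v) t v ->
  is_tree_on S (swap_edge T u v s t).
Proof.
move=> Htree Tuv Tst Hst HsS HtS Hus Htv; have Huv := tree_on_neq Htree Tuv.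
case: Htree => Ts Ti TS Tc Tn.
set T' := swap_edge T u v s t.
have T's : symmetric T'.
  move=> y z; rewrite /T' /swap_edge (del_edge_sym u v Ts).
  by rewrite [(y == s) && _]andbC [(y == t) && _]andbC orbAC.
split => //.
- move=> y; rewrite /T' /swap_edge /del_edge Ti /=.
  by apply/negP => /orP [] /andP [/eqP -> /eqP Hy]; rewrite Hy eqxx in Hst.
- move=> y z; rewrite /T' /swap_edge => /orP [/orP [/del_edge_sub /TS //|]|];
    by move=> /andP [/eqP -> /eqP ->]; rewrite ?HsS ?HtS.
- move=> y z Hy Hz; apply: (connect_sub _ (Tc y z Hy Hz)) => y' z' Hyz.
  have Cuv : connect T' u v.
    apply: (connect_trans (connect_sub_swap_edge s t Hus)).
    apply: (connect_trans _ (connect_sub_swap_edge s t Htv)).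
    by apply: connect1; rewrite /T' /swap_edge !eqxx orbT.
  case Hr : (((y' == u) && (z' == v)) || ((y' == v) && (z' == u))).
    by case/orP: Hr => /andP [/eqP -> /eqP ->]; rewrite // (sym_connect_sym T's).
  by apply: connect1; rewrite /T' /swap_edge /del_edge Hyz Hr.
- change (#|edge_set T'| = (#|S| - 1).*2)%N.
  have -> : edge_set T' = edge_set (del_edge T u v) :|: [set (s, t); (t, s)].
    by apply/setP => [[y z]]; rewrite !inE /T' /swap_edge /= !xpair_eqE orbA.
  rewrite cardsU card_edge_set_del // cards2 xpair_eqE (negbTE Hst) /=.
  have -> : edge_set (del_edge T u v) :&: [set (s, t); (t, s)] = finset.set0.
    apply/setP => [[y z]]; rewrite !inE /= !xpair_eqE.
    apply/negP => /andP [/andP [Hyz _]] /orP [] /andP [/eqP Hy /eqP Hz];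
      by move: Hyz; rewrite Hy Hz ?(Ts t s) (negbTE Tst).
  rewrite cards0 subn0 -Tn.
  have : (2 <= #|edge_set T|)%N.
    rewrite (cardsD1 (u, v)) inE Tuv (cardsD1 (v, u)) !inE xpair_eqE /= Ts Tuv.
    by rewrite (eq_sym v u) (negbTE Huv).
  by move=> H2; rewrite subnK.
Qed.

Lemma path_del_edge T s v x p : path T x p -> s \notin x :: p ->
  path (del_edge T s v) x p.
Proof.
elim: p x => [//|y p IH] x /= /andP [Hxy Hp].
rewrite !inE !negb_or => /andP [Hsx /andP [Hsy Hsp]].
rewrite IH ?inE ?negb_or ?Hsy ?Hsp // andbT /del_edge Hxy /=.
by rewrite !(eq_sym x) !(eq_sym y) (negbTE Hsx) (negbTE Hsy) /= andbF.
Qed.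

Lemma path_crossing_edge T (X : {pred V}) s p : path T s p -> uniq (s :: p) ->
  s \in X -> last s p \notin X ->
  exists u v, [/\ T u v, u \in X, v \notin X,
    connect (del_edge T u v) s u & connect (del_edge T u v) v (last s p)]
    /\ u \in s :: p /\ v \in s :: p.
Proof.
elim: p s => [|x p IH] s /=; first by move=> _ _ ->.
move=> /andP [Hsx Hp] /andP [Hsn Hu] HsX Hl.
case HxX : (x \in X); last first.
  exists s, x; split; last by rewrite !in_cons !eqxx !orbT.
  split; rewrite ?HxX //.
  by apply/connectP; exists p => //; apply: path_del_edge.
have [u [v [[Tuv HuX HvX Hxu Hvl] [Hu1 Hv1]]]] := IH x Hp Hu HxX Hl.
exists u, v; split; last by split; rewrite in_cons ?Hu1 ?Hv1 orbT.
split => //; apply: (connect_trans _ Hxu); apply: connect1.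
rewrite /del_edge Hsx /=.
by apply/negP => /orP [] /andP [/eqP Hs _]; move: Hsn; rewrite Hs ?Hu1 ?Hv1.
Qed.

Lemma connect_del_edge_ends T s t z p : path T z p -> last z p = s ->
  connect (del_edge T s t) z s \/ connect (del_edge T s t) z t.
Proof.
elim: p z => [|y p IH] z /=; first by move=> _ ->; left.
move=> /andP [Hzy Hp] Hl.
case: (eqVneq z s) => [->|Hzs]; first by left.
case: (eqVneq z t) => [->|Hzt]; first by right.
have E : del_edge T s t z y by rewrite /del_edge Hzy (negbTE Hzs) (negbTE Hzt).
by case: (IH y Hp Hl) => H; [left|right]; exact: (connect_trans (connect1 E) H).
Qed.

End Graphs.

Section RootedTree.
Variables (n : nat) (e : rel 'I_n.+1).
Hypothesis e_tree : is_tree_on [set: 'I_n.+1] e.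
Local Notation V := 'I_n.+1.
Local Notation root := (@substation n).
Implicit Types y z c : V.

Definition depth y := hopdist e y root.

Lemma tree_sym : symmetric e. Proof. by case: e_tree. Qed.

Lemma connect_root y : connect e y root.
Proof. by case: e_tree => _ _ _ Tc _; apply: Tc; rewrite inE. Qed.

Lemma depth_root : depth root = 0%N. Proof. exact: hopdistxx. Qed.

Lemma depth_eq0 y : depth y = 0%N -> y = root.
Proof. exact/hopdist_eq0/connect_root. Qed.

Lemma depth_edge y z : e y z -> (depth y <= (depth z).+1)%N.
Proof. by move=> H; apply: hopdist_edge H (connect_root z). Qed.

Lemma depth_step y : y != root -> exists2 z, e y z & (depth z).+1 = depth y.
Proof. exact/hopdist_step/connect_root. Qed.

Definition descending m : rel V := fun u v =>
  e u v && (depth v < depth u)%N && (depth u <= m)%N.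

Lemma connect_descending m y : (depth y <= m)%N -> connect (descending m) y root.
Proof.
move: {2}(depth y) (leqnn (depth y)) => k; elim: k y => [|k IH] y Hk Hm.
  by rewrite (@depth_eq0 y) //; lia.
case: (eqVneq y root) => [->//|Hy].
have [z Hyz Hz] := depth_step Hy.
apply: (connect_trans (connect1 (_ : descending m y z))).
  by rewrite /descending Hyz /=; apply/andP; split; lia.
by apply: IH; lia.
Qed.

(* Descending paths to the root avoiding the edge [(y, z)] would close a cycle. *)
Lemma depth_edge_neq y z : e y z -> depth y != depth z.
Proof.
move=> Hyz; apply/negP => /eqP HD.
have := tree_del_edge_disconnected e_tree Hyz; apply/negP.
have sub : subrel (descending (depth y)) (del_edge e y z).
  move=> u v /andP [/andP [Huv Hlt] _]; rewrite /del_edge Huv /=.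
  by apply/negP => /orP [] /andP [/eqP Hu /eqP Hv]; move: Hlt; rewrite Hu Hv HD ltnn.
have C y' : (depth y' <= depth y)%N -> connect (del_edge e y z) y' root.
  by move/connect_descending; apply: connect_sub => u v /sub/connect1.
rewrite (connect_trans (C y (leqnn _))) //.
by rewrite (sym_connect_sym (del_edge_sym y z tree_sym)) C ?HD.
Qed.

Lemma lower_neighbor_uniq y z1 z2 : e y z1 -> e y z2 ->
  (depth z1 < depth y)%N -> (depth z2 < depth y)%N -> z1 = z2.
Proof.
move=> H1 H2 L1 L2; apply/eqP/negP => /negP Hz.
have := tree_del_edge_disconnected e_tree H1; apply/negP.
have sub : subrel (descending (depth y).-1) (del_edge e y z1).
  move=> u v /andP [/andP [Huv Hlt] Hle]; rewrite /del_edge Huv /=.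
  by apply/negP => /orP [] /andP [/eqP Hu /eqP Hv]; move: Hlt Hle; rewrite Hu Hv; lia.
have C y' : (depth y' < depth y)%N -> connect (del_edge e y z1) y' root.
  move=> Hy'; have /connect_descending : (depth y' <= (depth y).-1)%N by lia.
  by apply: connect_sub => u v /sub/connect1.
have E2 : del_edge e y z1 y z2.
  rewrite /del_edge H2 eqxx /= [z2 == z1]eq_sym (negbTE Hz) /=.
  by apply/negP => /andP [/eqP Hy _]; move: L1; rewrite -Hy ltnn.
rewrite (connect_trans (connect1 E2)) // (connect_trans (C z2 L2)) //.
by rewrite (sym_connect_sym (del_edge_sym y z1 tree_sym)) C.
Qed.

Lemma depth_edge_cases y z : e y z ->
  (depth z).+1 = depth y \/ (depth y).+1 = depth z.
Proof.
move=> H; have := depth_edge_neq H; have := depth_edge H.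
have := @depth_edge z y; rewrite tree_sym => /(_ H); lia.
Qed.

Definition parent y := odflt root [pick z | e y z && (depth z < depth y)%N].

Lemma parentP y : y != root -> e y (parent y) /\ depth y = (depth (parent y)).+1.
Proof.
move=> Hy; have [z Hz1 Hz2] := depth_step Hy.
rewrite /parent; case: pickP => [z' /andP [H1 H2]|/(_ z)]; last first.
  by rewrite Hz1 -Hz2 leqnn.
by split => //; case: (depth_edge_cases H1) => //; lia.
Qed.

Lemma parent_edge y : y != root -> e y (parent y).
Proof. by case/parentP. Qed.

Lemma depth_parent y : y != root -> depth y = (depth (parent y)).+1.
Proof. by case/parentP. Qed.

Lemma parent_eq y z : e y z -> (depth z < depth y)%N -> parent y = z.
Proof.
move=> H L; have Hy : y != root.
  by apply: contraTneq L => ->; rewrite depth_root.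
by apply: lower_neighbor_uniq (parent_edge Hy) H _ L; rewrite (depth_parent Hy).
Qed.

Lemma is_parentE a b : is_parent e a b = (b != root) && (parent b == a).
Proof.
apply/idP/idP => [/andP [H L]|/andP [Hb /eqP <-]].
  rewrite (parent_eq H L) eqxx andbT.
  by apply: contraTneq L => ->; rewrite hopdistxx.
by rewrite /is_parent parent_edge // -/(depth b) -/(depth (parent b)) (depth_parent Hb) ltnSn.
Qed.

Lemma childrenE b c : (c \in children e b) = (c != root) && (parent c == b).
Proof. by rewrite inE is_parentE. Qed.

Lemma edge_parent y z : e y z ->
  (y != root /\ z = parent y) \/ (z != root /\ parent z = y).
Proof.
move=> H; case: (depth_edge_cases H) => L.
  left; split; last by rewrite (parent_eq H) //; lia.
  by apply/eqP => Ey; move: L; rewrite Ey depth_root.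
have Hzy : e z y by rewrite tree_sym.
right; split; last by rewrite (parent_eq Hzy) //; lia.
by apply/eqP => Ez; move: L; rewrite Ez depth_root.
Qed.

Lemma depth_ind (Pr : V -> Prop) : Pr root ->
  (forall y, y != root -> Pr (parent y) -> Pr y) -> forall y, Pr y.
Proof.
move=> H0 HS y; move: {2}(depth y) (leqnn (depth y)) => k; elim: k y => [|k IH] y Hk.
  by rewrite (@depth_eq0 y) //; lia.
case: (eqVneq y root) => [->//|Hy].
by apply: HS => //; apply: IH; move: Hk; rewrite (depth_parent Hy).
Qed.

Definition ancestors y : {set V} := [set:: traject parent y (depth y).+1].

Lemma ancestors_root : ancestors root = [set root].
Proof. by rewrite /ancestors depth_root set_seq1. Qed.

Lemma ancestors_parent y : y != root -> ancestors y = y |: ancestors (parent y).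
Proof. by move=> Hy; rewrite /ancestors {1}(depth_parent Hy) set_cons. Qed.

Lemma ancestors_self y : y \in ancestors y.
Proof.
case: (eqVneq y root) => [->|Hy]; first by rewrite ancestors_root inE.
by rewrite ancestors_parent // !in_setU1 eqxx.
Qed.

Lemma parent_ancestor y : y != root -> parent y \in ancestors y.
Proof. by move=> Hy; rewrite ancestors_parent // !in_setU1 ancestors_self orbT. Qed.

Lemma depth_ancestor c y : c \in ancestors y ->
  (depth c <= depth y)%N /\ (depth c = depth y -> c = y).
Proof.
elim/depth_ind: y c => [|y Hy IH] c.
  by rewrite ancestors_root inE => /eqP ->.
rewrite ancestors_parent // !in_setU1 => /orP [/eqP -> //|/IH [L1 L2]].
by rewrite (depth_parent Hy); split; lia.
Qed.

Lemma ancestors_trans c z y : c \in ancestors z -> z \in ancestors y ->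
  c \in ancestors y.
Proof.
move=> Hc; elim/depth_ind: y => [|y Hy IH].
  by rewrite ancestors_root inE => /eqP Hz; move: Hc; rewrite Hz ancestors_root.
rewrite ancestors_parent // !in_setU1 => /orP [/eqP Hz|/IH ->]; last by rewrite orbT.
by move: Hc; rewrite Hz ancestors_parent // !in_setU1.
Qed.

Lemma ancestors_total c1 c2 y : c1 \in ancestors y -> c2 \in ancestors y ->
  c1 \in ancestors c2 \/ c2 \in ancestors c1.
Proof.
elim/depth_ind: y => [|y Hy IH].
  by rewrite ancestors_root !finset.in_set1 => /eqP -> /eqP ->; left; rewrite ancestors_self.
rewrite ancestors_parent // !in_setU1 => /orP [/eqP ->|H1] /orP [/eqP ->|H2].
- by left; rewrite ancestors_self.
- by right; rewrite ancestors_parent // !in_setU1 H2 orbT.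
- by left; rewrite ancestors_parent // !in_setU1 H1 orbT.
- exact: IH.
Qed.

Lemma notin_ancestors_depth y z : (depth z < depth y)%N -> y \notin ancestors z.
Proof. by move=> Hlt; apply/negP => /depth_ancestor [L _]; move: Hlt; rewrite ltnNge L. Qed.

Lemma sibling_notin_ancestors y z : y != root -> z != root ->
  parent y = parent z -> y != z -> y \notin ancestors z.
Proof.
move=> Hy Hz Hp Hyz; apply/negP => /depth_ancestor [_ Heq]; move: Hyz.
by rewrite Heq ?eqxx // (depth_parent Hy) (depth_parent Hz) Hp.
Qed.

Lemma ancestors_depth_inj z1 z2 y : depth z1 = depth z2 ->
  z1 \in ancestors y -> z2 \in ancestors y -> z1 = z2.
Proof.
move=> HD H1 H2; case: (ancestors_total H1 H2) => /depth_ancestor [_ ->] //.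
Qed.

Lemma ancestor_child c y : c \in ancestors y -> c != y ->
  exists z, [/\ z != root, parent z = c & z \in ancestors y].
Proof.
elim/depth_ind: y => [|y Hy IH].
  by rewrite ancestors_root inE => /eqP ->; rewrite eqxx.
rewrite ancestors_parent // !in_setU1 => /orP [/eqP ->|H]; first by rewrite eqxx.
move=> Hcy; case: (eqVneq (parent y) c) => [<-|Hne].
  by exists y; split => //; rewrite finset.in_setU1 eqxx.
have Hcp : c != parent y by rewrite eq_sym.
have [z [Hz1 Hz2 Hz3]] := IH H Hcp.
by exists z; split => //; rewrite finset.in_setU1 Hz3 orbT.
Qed.

(* [z] lies on the tree path between [u] and [w]. *)
Definition on_path z u w :=
  (ancestors z \subset ancestors u :|: ancestors w) &&
  (ancestors u :&: ancestors w \subset ancestors z).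

Lemma on_path_r z u : on_path z u z.
Proof.
apply/andP; split; apply/fintype.subsetP => c.
  by rewrite finset.in_setU => ->; rewrite orbT.
by rewrite finset.in_setI => /andP [].
Qed.

Lemma ancestor_on_path y u w : y \in ancestors u -> y \notin ancestors w ->
  on_path y u w.
Proof.
move=> Hu Hw; apply/andP; split; apply/fintype.subsetP => c.
  by move=> Hc; rewrite finset.in_setU (ancestors_trans Hc Hu).
rewrite finset.in_setI => /andP [Hcu Hcw].
case: (ancestors_total Hcu Hu) => // H.
by move: Hw; rewrite (ancestors_trans H Hcw).
Qed.

Lemma parent_on_path y u w : y \in ancestors u -> y \notin ancestors w ->
  y != root -> on_path (parent y) w u.
Proof.
move=> Hu Hw Hy; apply/andP; split; apply/fintype.subsetP => c.
  move=> Hc; have Hcu := ancestors_trans Hc (ancestors_trans (parent_ancestor Hy) Hu).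
  by rewrite finset.in_setU Hcu orbT.
rewrite finset.in_setI => /andP [Hcw Hcu].
case: (ancestors_total Hcu Hu) => H.
  move: H; rewrite ancestors_parent // in_setU1 => /orP [/eqP Hc|//].
  by move: Hw; rewrite -Hc Hcw.
by move: Hw; rewrite (ancestors_trans H Hcw).
Qed.

End RootedTree.

Section SpanningTrees.
Variables (R : numDomainType) (n : nat).
Local Notation V := 'I_n.+1.
Variable w : V -> V -> R.
Hypothesis w_sym : forall u v, w u v = w v u.
Implicit Types (T : rel V) (u v s t z : V).

Definition pair_weight (uv : V * V) : R :=
  if (uv.1 < uv.2)%N then w uv.1 uv.2 else 0.

Definition weight T : R := \sum_(uv in edge_set T) pair_weight uv.

Lemma pair_weight2 u v : u != v -> pair_weight (u, v) + pair_weight (v, u) = w u v.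
Proof.
move=> Huv; rewrite /pair_weight /=; case: (ltngtP u v) => H.
- by rewrite addr0.
- by rewrite add0r w_sym.
- by move: Huv; rewrite (val_inj H) eqxx.
Qed.

Lemma weight_swap_edge T u v s t : symmetric T -> T u v -> ~~ T s t ->
  u != v -> s != t -> weight (swap_edge T u v s t) = weight T - w u v + w s t.
Proof.
move=> Ts Tuv Tst Huv Hst.
have Huv1 : (u, v) \in edge_set T by rewrite inE.
have Hvu : (v, u) \in edge_set T :\ (u, v).
  by rewrite !inE xpair_eqE (eq_sym v u) (negbTE Huv) /= Ts.
have Hst1 : (s, t) \in edge_set (swap_edge T u v s t).
  by rewrite inE /swap_edge /= !eqxx orbT.
have Hts1 : (t, s) \in edge_set (swap_edge T u v s t) :\ (s, t).
  by rewrite !inE xpair_eqE (eq_sym t s) (negbTE Hst) /= /swap_edge !eqxx !orbT.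
rewrite /weight (big_setD1 _ Huv1) (big_setD1 _ Hvu).
rewrite (big_setD1 _ Hst1) (big_setD1 _ Hts1).
have -> : edge_set (swap_edge T u v s t) :\ (s, t) :\ (t, s) =
          edge_set T :\ (u, v) :\ (v, u).
  apply/setP => uv; rewrite !inE.
  case: (eqVneq uv (t, s)) => [->|H1] /=; first by rewrite Ts (negbTE Tst) !andbF.
  case: (eqVneq uv (s, t)) => [->|H2] /=; first by rewrite (negbTE Tst) !andbF.
  case: uv H1 H2 => y z; rewrite /swap_edge !xpair_eqE /= => /negbTE -> /negbTE ->.
  rewrite !orbF /del_edge.
  by case: (T y z); case: (y == u); case: (z == v); case: (y == v); case: (z == u).
by rewrite /= -(pair_weight2 Huv) -(pair_weight2 Hst); ring.
Qed.

Section UniqueMST.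
Variables (S : {set V}) (T : rel V).
Hypothesis T_tree : is_tree_on S T.
Hypothesis T_unique_min : forall T', is_tree_on S T' -> weight T' <= weight T -> T' =2 T.

(* Replacing the tree edge [(u, v)] by [(s, t)] would give a spanning tree of
   weight at most [weight T] that differs from [T]. *)
Lemma unique_mst_exchange u v s t : T u v -> ~~ T s t -> s != t -> s \in S -> t \in S ->
  connect (del_edge T u v) u s -> connect (del_edge T u v) t v ->
  ~ w s t <= w u v.
Proof.
move=> Tuv Tst Hst HsS HtS Hus Htv Hw.
have [Ts _ _ _ _] := T_tree; have Huv := tree_on_neq T_tree Tuv.
have T'_tree := swap_edge_tree T_tree Tuv Tst Hst HsS HtS Hus Htv.
have Hle : weight (swap_edge T u v s t) <= weight T.
  by rewrite weight_swap_edge // -addrA gerDl addrC subr_le0.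
move: Tst; rewrite -(T_unique_min T'_tree Hle s t) /swap_edge !eqxx orbT.
by [].
Qed.

Lemma unique_mst_cut (X : {pred V}) s t : s \in X -> t \notin X -> s \in S -> t \in S ->
  (forall u v, u \in S -> v \in S -> u \in X -> v \notin X -> w s t <= w u v) ->
  T s t.
Proof.
move=> HsX HtX HsS HtS Hw.
have [Ts _ TS Tc _] := T_tree.
apply/negPn/negP => Tst.
have /connectP [p0 Hp0 Hl0] := Tc s t HsS HtS.
move: Hl0; case: (shortenP Hp0) => p Hp Hu _ Hl.
have HlX : last s p \notin X by rewrite -Hl.
have [u [v [[Tuv HuX HvX Hsu Hvt] _]]] := path_crossing_edge Hp Hu HsX HlX.
have /andP [HuS HvS] := TS _ _ Tuv.
have T0s := del_edge_sym u v Ts.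
have Hst : s != t by apply: contraTneq HsX => ->.
apply: (unique_mst_exchange Tuv Tst Hst HsS HtS).
- by rewrite (sym_connect_sym T0s).
- by rewrite (sym_connect_sym T0s) Hl.
- exact: Hw.
Qed.

Lemma unique_mst_cycle s t z : T s t -> z \in S -> z != s -> z != t ->
  w s z <= w s t -> w z t <= w s t -> False.
Proof.
move=> Tst HzS Hzs Hzt H1 H2.
have [Ts _ TS Tc _] := T_tree.
have /andP [HsS HtS] := TS _ _ Tst.
have T0s := del_edge_sym s t Ts.
have Hcut := tree_del_edge_disconnected T_tree Tst.
have /connectP [p Hp Hl] := Tc z s HzS HsS.
case: (connect_del_edge_ends t Hp (esym Hl)) => Hc.
- have Tzt : ~~ T z t.
    apply: contra Hcut => Tzt; rewrite (sym_connect_sym T0s) in Hc.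
    apply: (connect_trans Hc); apply: connect1.
    by rewrite /del_edge Tzt (negbTE Hzs) (negbTE Hzt).
  apply: (unique_mst_exchange Tst Tzt Hzt HzS HtS) => //.
  by rewrite (sym_connect_sym T0s).
- have Tsz : ~~ T s z.
    apply: contra Hcut => Tsz; apply: (connect_trans _ Hc); apply: connect1.
    by rewrite /del_edge Tsz eqxx (negbTE Hzs) (negbTE Hzt) ?andbF.
  have Hsz : s != z by rewrite eq_sym.
  exact: (unique_mst_exchange Tst Tsz Hsz HsS HzS).
Qed.

End UniqueMST.
End SpanningTrees.

Lemma tree_weightE (R : realType) (n : nat) (w : 'I_n.+1 -> 'I_n.+1 -> R) T :
  tree_weight (fun u v => (w u v)%:E) T = (weight w T)%:E.
Proof.
rewrite /tree_weight; under eq_bigr do rewrite sumEFin.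
rewrite sumEFin pair_big_dep /weight; congr (_%:E).
rewrite big_mkcond [RHS]big_mkcond; apply: eq_bigr => [[u v]] _ /=.
by rewrite /pair_weight inE /=; case: (T u v); case: (u < v)%N.
Qed.

Lemma unique_MST_weight (R : realType) (n : nat) (S : {set 'I_n.+1})
    (w : 'I_n.+1 -> 'I_n.+1 -> R) T :
  is_MST S (fun u v => (w u v)%:E) T ->
  (forall T', is_MST S (fun u v => (w u v)%:E) T' -> T' =2 T) ->
  forall T', is_tree_on S T' -> weight w T' <= weight w T -> T' =2 T.
Proof.
move=> [T_tree T_min] T_uniq T' T'_tree Hle; apply: T_uniq; split => // T'' T''_tree.
rewrite !tree_weightE lee_fin (le_trans Hle) // -lee_fin -!tree_weightE.
exact: T_min.
Qed.

Section LaplacianInverse.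
Variables (F : fieldType) (n : nat) (e : rel 'I_n.+1).
Local Notation V := 'I_n.+1.
Local Notation root := (@substation n).
Local Notation lift0 := (lift ord0).
Hypothesis e_tree : is_tree_on [set: V] e.
Variable rr : V -> V -> F.
Hypothesis rr_sym : forall u v, e u v -> rr u v = rr v u.
Hypothesis rr_neq0 : forall u v, e u v -> rr u v != 0.
Local Notation ancestors := (ancestors e).
Local Notation parent := (parent e).

Definition parent_res c := rr c (parent c).

Definition shared_res y j : F := \sum_(c | c != root)
  (if (c \in ancestors y) && (c \in ancestors j) then parent_res c else 0).

Definition shared_res_mx : 'M[F]_n :=
  \matrix_(i, j) shared_res (lift0 i) (lift0 j).

Lemma shared_res_root j : shared_res root j = 0.
Proof.
by rewrite /shared_res big1 // => c Hc; rewrite ancestors_root // inE (negbTE Hc).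
Qed.

Lemma shared_res_parent y j : y != root ->
  shared_res y j - shared_res (parent y) j =
  if y \in ancestors j then parent_res y else 0.
Proof.
move=> Hy; have Hpy : y \notin ancestors (parent y).
  by rewrite notin_ancestors_depth // (depth_parent e_tree Hy).
rewrite /shared_res -sumrB (bigD1 y) //= big1 ?addr0.
  by rewrite (ancestors_self e_tree) (negbTE Hpy) /=; case: (y \in ancestors j); rewrite ?subr0.
move=> c /andP [_ Hcy]; rewrite (ancestors_parent e_tree Hy) in_setU1 (negbTE Hcy) /=.
by rewrite subrr.
Qed.

Lemma parent_res_shared_res y j : y != root ->
  (parent_res y)^-1 * (shared_res y j - shared_res (parent y) j) =
  (y \in ancestors j)%:R.
Proof.
move=> Hy; rewrite shared_res_parent //; case: (y \in ancestors j); last by rewrite mulr0.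
by rewrite mulVf // rr_neq0 // parent_edge.
Qed.

Lemma redLap_mul_col (w : V -> V -> F) (f : V -> F) i : f root = 0 ->
  \sum_k redLap e w i k * f (lift0 k) =
  \sum_(z | e (lift0 i) z) w (lift0 i) z * (f (lift0 i) - f z).
Proof.
move=> f0; set I := lift0 i.
have eII : e I I = false by case: e_tree => _ Ti _ _ _; rewrite Ti.
have -> : \sum_k redLap e w i k * f (lift0 k) =
    \sum_k (if i == k then \sum_(z | e I z) w I z else 0) * f (lift0 k)
    - \sum_k (if e I (lift0 k) then w I (lift0 k) else 0) * f (lift0 k).
  rewrite -sumrB; apply: eq_bigr => k _; rewrite mxE.
  case: (eqVneq i k) => [<-|Hik]; first by rewrite eII mul0r subr0.
  by case: (e I (lift0 k)); rewrite ?mul0r ?subr0 ?sub0r ?mulNr.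
rewrite (bigD1 i) //= eqxx [X in _ + X - _]big1 ?addr0; last first.
  by move=> k; rewrite eq_sym => /negbTE ->; rewrite mul0r.
have -> : \sum_k (if e I (lift0 k) then w I (lift0 k) else 0) * f (lift0 k) =
    \sum_(z | e I z) w I z * f z.
  have f0' : f ord0 = 0 := f0.
  rewrite [RHS]big_mkcond big_ord_recl /= f0' mulr0 if_same add0r.
  by apply: eq_bigr => z _; case: (e I _); rewrite ?mul0r.
by rewrite big_distrl -sumrB; apply: eq_bigr => z _; rewrite mulrBr.
Qed.

Lemma sum_children_ancestors y j : y != root ->
  \sum_(z | e y z && (z != parent y)) ((z \in ancestors j)%:R : F) =
  ((y \in ancestors j) && (y != j))%:R.
Proof.
move=> Hy; have child z : e y z -> z != parent y -> z != root /\ parent z = y.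
  by move=> Hz; case: (edge_parent e_tree Hz) => [[_ ->]|//]; rewrite eqxx.
case: (boolP ((y \in ancestors j) && (y != j))) => [/andP [Hyj Hneq]|Hno].
  have [z0 [Hz0r Hz0p Hz0j]] := ancestor_child e_tree Hyj Hneq.
  have Hyz0 : e y z0 by rewrite -Hz0p tree_sym // parent_edge.
  have Hz0np : z0 != parent y.
    apply/eqP => Hz; have := depth_parent e_tree Hz0r; rewrite Hz0p.
    by rewrite (depth_parent e_tree Hy) -Hz; lia.
  rewrite (bigD1 z0) /=; last by rewrite Hyz0 Hz0np.
  rewrite Hz0j big1 ?addr0 // => z /andP [/andP [Hz Hzp] Hzz0].
  case: (boolP (z \in ancestors j)) => // Hzj; have [Hzr Hpz] := child z Hz Hzp.
  have HD : depth e z = depth e z0.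
    by rewrite (depth_parent e_tree Hzr) (depth_parent e_tree Hz0r) Hpz Hz0p.
  by rewrite (ancestors_depth_inj e_tree HD Hzj Hz0j) eqxx in Hzz0.
rewrite big1 // => z /andP [Hz Hzp].
case: (boolP (z \in ancestors j)) => // Hzj; have [Hzr Hpz] := child z Hz Hzp.
have Hyj : y \in ancestors j.
  by apply: (ancestors_trans e_tree) Hzj; rewrite -Hpz (parent_ancestor e_tree).
move: Hno; rewrite Hyj /= negbK => /eqP Eyj.
have [L _] := depth_ancestor e_tree Hzj.
by move: L; rewrite -Eyj (depth_parent e_tree Hzr) Hpz ltnn.
Qed.

(* The parent edge of [lift0 i] contributes [lift0 i \in ancestors (lift0 j)] to
   the row sum, and each child edge subtracts one when the child is an ancestor
   of [lift0 j]. *)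
Lemma redLap_mul_shared_res :
  redLap e (fun u v => (rr u v)^-1) *m shared_res_mx = 1%:M.
Proof.
apply/matrixP => i j; rewrite [LHS]mxE [RHS]mxE.
under eq_bigr do rewrite [shared_res_mx _ _]mxE.
rewrite (@redLap_mul_col _ (shared_res ^~ (lift0 j))) ?shared_res_root //.
set I := lift0 i; set J := lift0 j.
have HI : I != root by apply/eqP => /(congr1 val).
rewrite (bigD1 (parent I)) ?parent_edge //= parent_res_shared_res //.
have Hchildren : \sum_(z | e I z && (z != parent I))
    (rr I z)^-1 * (shared_res I J - shared_res z J) =
    - \sum_(z | e I z && (z != parent I)) (z \in ancestors J)%:R.
  rewrite -sumrN; apply: eq_bigr => z /andP [Hz Hzp].
  have [[_ Ez]|[Hzr Hpz]] := edge_parent e_tree Hz; first by rewrite Ez eqxx in Hzp.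
  have Epz : e (parent z) z by rewrite Hpz.
  by rewrite -Hpz -opprB mulrN (rr_sym Epz) -/(parent_res z) parent_res_shared_res.
rewrite Hchildren sum_children_ancestors //.
have -> : (i == j) = (I == J) by rewrite (inj_eq lift_inj).
case: (eqVneq I J) => [<-|_]; first by rewrite (ancestors_self e_tree) andbF subr0.
by case: (I \in ancestors J); rewrite /= ?subr0 ?subrr.
Qed.

Lemma invmx_redLap : invmx (redLap e (fun u v => (rr u v)^-1)) = shared_res_mx.
Proof.
have [Hu _] := mulmx1_unit redLap_mul_shared_res.
by rewrite -[LHS]mulmx1 -redLap_mul_shared_res mulKmx.
Qed.

End LaplacianInverse.

Section Covariance.
Context d (T : measurableType d) (R : realType) (P : probability T R).
Local Notation L2 := (Lfun P 2%:E).
Implicit Types X Y Z : T -> R.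

Definition cov X Y : R := fine (covariance P X Y).

Lemma Lfun2_Lfun1 X : X \in L2 -> X \in Lfun P 1.
Proof. exact/Lfun_subset12/fin_num_measure. Qed.

Lemma covarianceE X Y : X \in L2 -> Y \in L2 -> covariance P X Y = (cov X Y)%:E.
Proof.
move=> HX HY; rewrite /cov fineK //.
by apply: covariance_fin_num; [apply: Lfun2_Lfun1..|apply: Lfun2_mul_Lfun1].
Qed.

Lemma Lfun2D X Y : X \in L2 -> Y \in L2 -> (X \+ Y)%R \in L2.
Proof. by move=> HX HY; apply: (@rpredD _ L2 X Y HX HY); rewrite lee1n. Qed.

Lemma Lfun2Z a X : X \in L2 -> (a \o* X)%R \in L2.
Proof. by move=> HX; apply: Lfun_scale => //; rewrite ler1n. Qed.

Lemma Lfun2_sum (I : Type) (s : seq I) (F : I -> T -> R) :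
  (forall i, F i \in L2) -> (\sum_(i <- s) F i) \in L2.
Proof.
move=> HF; elim: s => [|i s IH]; first by rewrite big_nil; exact: (Lfun_cst P 0 2).
by rewrite big_cons; apply: Lfun2D.
Qed.

Lemma covC X Y : cov X Y = cov Y X.
Proof. by rewrite /cov covarianceC. Qed.

Lemma covDl X Y Z : X \in L2 -> Y \in L2 -> Z \in L2 ->
  cov (X \+ Y)%R Z = cov X Z + cov Y Z.
Proof.
move=> HX HY HZ; apply: EFin_inj.
by rewrite EFinD -!covarianceE ?Lfun2D // covarianceDl.
Qed.

Lemma covZl a X Y : X \in L2 -> Y \in L2 -> cov (a \o* X)%R Y = a * cov X Y.
Proof.
move=> HX HY; apply: EFin_inj.
rewrite EFinM -!covarianceE ?Lfun2Z // covarianceZl //.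
- exact: Lfun2_Lfun1.
- exact: Lfun2_Lfun1.
- exact: Lfun2_mul_Lfun1.
Qed.

Lemma cov_suml (I : Type) (s : seq I) (F : I -> T -> R) Z :
  (forall i, F i \in L2) -> Z \in L2 ->
  cov (\sum_(i <- s) F i) Z = \sum_(i <- s) cov (F i) Z.
Proof.
move=> HF HZ; elim: s => [|i s IH].
  by rewrite !big_nil /cov (_ : 0 = cst 0) // covariance_cst_l.
by rewrite !big_cons -IH covDl // Lfun2_sum.
Qed.

Lemma cov_sumr (I : Type) (s : seq I) (F : I -> T -> R) Z :
  (forall i, F i \in L2) -> Z \in L2 ->
  cov Z (\sum_(i <- s) F i) = \sum_(i <- s) cov Z (F i).
Proof.
by move=> HF HZ; rewrite covC cov_suml //; apply: eq_bigr => i _; rewrite covC.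
Qed.

End Covariance.

Section VoltageDifferences.
Context d (Tm : measurableType d) (R : realType) (P : probability Tm R).
Variables (n : nat) (e : rel 'I_n.+1) (r x : 'I_n.+1 -> 'I_n.+1 -> R).
Variables (p q : 'I_n -> Tm -> R) (v0 : R).
Local Notation V := 'I_n.+1.
Local Notation root := (@substation n).
Local Notation lift0 := (lift ord0).
Local Notation L2 := (Lfun P 2%:E).
Hypothesis e_tree : is_tree_on [set: V] e.
Hypothesis r_sym : forall u v, e u v -> r u v = r v u.
Hypothesis x_sym : forall u v, e u v -> x u v = x v u.
Hypothesis r_neq0 : forall u v, e u v -> r u v != 0.
Hypothesis x_neq0 : forall u v, e u v -> x u v != 0.
Hypothesis p_L2 : forall i, p i \in L2.
Hypothesis q_L2 : forall i, q i \in L2.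
Hypothesis cov_pp : forall i j, i != j -> covariance P (p i) (p j) = 0%E.
Hypothesis cov_qq : forall i j, i != j -> covariance P (q i) (q j) = 0%E.
Hypothesis cov_qp : forall i j, i != j -> covariance P (q i) (p j) = 0%E.

Definition injection_comb (a b : 'I_n -> R) j : Tm -> R :=
  (a j \o* p j \+ b j \o* q j)%R.

Lemma injection_comb_L2 a b j : injection_comb a b j \in L2.
Proof. by apply: Lfun2D; apply: Lfun2Z. Qed.

Definition sens_p y j := shared_res e r y (lift0 j).
Definition sens_q y j := shared_res e x y (lift0 j).

Lemma voltageE y : voltage e r x p q v0 y =
  (cst (if y == root then v0 else 0) \+ \sum_j injection_comb (sens_p y) (sens_q y) j)%R.
Proof.
apply/funext => t; rewrite /voltage fct_sumE /=.
case: unliftP => [i ->|->] /=.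
  rewrite /H_r /H_x !invmx_redLap // add0r; apply: eq_bigr => j _.
  by rewrite !mxE /injection_comb /sens_p /sens_q /=; ring.
rewrite big1 ?addr0 // => j _.
by rewrite /injection_comb /sens_p /sens_q /= !shared_res_root // !mulr0 addr0.
Qed.

Lemma voltage_L2 y : voltage e r x p q v0 y \in L2.
Proof.
rewrite voltageE; apply: Lfun2D; first exact: (Lfun_cst P _ 2).
by apply: Lfun2_sum => j; apply: injection_comb_L2.
Qed.

Definition dsens_p u w j := sens_p u j - sens_p w j.
Definition dsens_q u w j := sens_q u j - sens_q w j.

Lemma voltage_diffE u w :
  (voltage e r x p q v0 u \- voltage e r x p q v0 w =
   cst ((if u == root then v0 else 0) - (if w == root then v0 else 0)) \+
   \sum_j injection_comb (dsens_p u w) (dsens_q u w) j)%R.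
Proof.
apply/funext => t; rewrite !voltageE /= !fct_sumE /=.
rewrite (_ : \sum_j injection_comb (dsens_p u w) (dsens_q u w) j t =
   \sum_j injection_comb (sens_p u) (sens_q u) j t -
   \sum_j injection_comb (sens_p w) (sens_q w) j t); first by ring.
by rewrite -sumrB; apply: eq_bigr => j _; rewrite /injection_comb /= /dsens_p /dsens_q; ring.
Qed.

Definition injection_var j (a b : R) :=
  a ^+ 2 * cov P (p j) (p j) + b ^+ 2 * cov P (q j) (q j) + 2 * a * b * cov P (q j) (p j).

Lemma cov_injection_comb a b j k : cov P (injection_comb a b j) (injection_comb a b k) =
  a j * a k * cov P (p j) (p k) + a j * b k * cov P (p j) (q k) +
  b j * a k * cov P (q j) (p k) + b j * b k * cov P (q j) (q k).
Proof.
rewrite /injection_comb covDl ?Lfun2Z ?injection_comb_L2 // !covZl ?injection_comb_L2 //.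
rewrite [cov P (p j) _]covC [cov P (q j) _]covC !covDl ?Lfun2Z // !covZl //.
rewrite [cov P (p k) (p j)]covC [cov P (q k) (p j)]covC.
by rewrite [cov P (p k) (q j)]covC [cov P (q k) (q j)]covC; ring.
Qed.

(* Only the diagonal terms survive: injections at distinct nodes are uncorrelated. *)
Lemma variance_injection_sum c a b :
  'V_P[(cst c \+ \sum_j injection_comb a b j)%R] =
  (\sum_j injection_var j (a j) (b j))%:E.
Proof.
have cov0 X Y : covariance P X Y = 0%E -> cov P X Y = 0 by rewrite /cov => ->.
have HL := injection_comb_L2 a b.
have HS : (\sum_j injection_comb a b j) \in L2 by apply: Lfun2_sum.
rewrite varianceD_cst_l // /variance covarianceE // cov_suml //; congr (_%:E).
apply: eq_bigr => j _; rewrite cov_sumr //.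
rewrite (bigD1 j) //= big1 ?addr0.
  by rewrite cov_injection_comb /injection_var [cov P (p j) (q j)]covC; ring.
move=> k Hkj; have Hjk : j != k by rewrite eq_sym.
rewrite cov_injection_comb (cov0 _ _ (cov_pp Hjk)) (cov0 _ _ (cov_qq Hjk)).
by rewrite (cov0 _ _ (cov_qp Hjk)) covC (cov0 _ _ (cov_qp Hkj)) !mulr0 !addr0.
Qed.

Lemma phi_variance u w : phi P e r x p q v0 u w =
  'V_P[(voltage e r x p q v0 u \- voltage e r x p q v0 w)%R].
Proof.
have L1 y := Lfun2_Lfun1 (voltage_L2 y).
have Hfin : fine 'E_P[(voltage e r x p q v0 u \- voltage e r x p q v0 w)%R] =
    fine 'E_P[voltage e r x p q v0 u] - fine 'E_P[voltage e r x p q v0 w].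
  by rewrite expectationB // fineB // expectation_fin_num.
rewrite /phi /variance covariance.unlock Hfin.
by congr (expectation P _); apply/funext => t /=; rewrite expr2 !fctE /=; ring.
Qed.

Definition phiR u w := \sum_j injection_var j (dsens_p u w j) (dsens_q u w j).

Lemma phiE u w : phi P e r x p q v0 u w = (phiR u w)%:E.
Proof. by rewrite phi_variance voltage_diffE variance_injection_sum. Qed.

End VoltageDifferences.

Section Monotonicity.
Context d (Tm : measurableType d) (R : realType) (P : probability Tm R).
Variables (n : nat) (e : rel 'I_n.+1) (r x : 'I_n.+1 -> 'I_n.+1 -> R).
Variables (p q : 'I_n -> Tm -> R).
Local Notation V := 'I_n.+1.
Local Notation root := (@substation n).
Local Notation lift0 := (lift ord0).
Hypothesis e_tree : is_tree_on [set: V] e.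
Hypothesis r_gt0 : forall u v, e u v -> 0 < r u v.
Hypothesis x_gt0 : forall u v, e u v -> 0 < x u v.
Hypothesis cov_qp_ge0 : forall i, (0 <= covariance P (q i) (p i))%E.
Local Notation ancestors := (ancestors e).
Local Notation injection_var := (injection_var P p q).
Local Notation phiR := (phiR P e r x p q).

Lemma injection_varN j a b : injection_var j (- a) (- b) = injection_var j a b.
Proof. by rewrite /injection_var; ring. Qed.

Lemma injection_var_le j a a' b b' : 0 <= a' -> a' <= a -> 0 <= b' -> b' <= b ->
  injection_var j a' b' <= injection_var j a b.
Proof.
move=> a0 aa b0 bb; rewrite /injection_var.
have var_ge0 X : 0 <= cov P X X by apply: fine_ge0; exact: variance_ge0.
have Hqp : 0 <= cov P (q j) (p j) by apply: fine_ge0.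
have Hab : a' * b' <= a * b by rewrite ler_pM.
have Ha2 : a' ^+ 2 <= a ^+ 2 by rewrite !expr2 ler_pM.
have Hb2 : b' ^+ 2 <= b ^+ 2 by rewrite !expr2 ler_pM.
by rewrite !lerD ?ler_wpM2r ?var_ge0 // -!mulrA ler_wpM2l.
Qed.

(* Within one sign pattern, dropping terms of a sum of nonnegative (or of
   nonpositive) terms shrinks both coefficients in absolute value. *)
Lemma injection_var_sum_le j (t t' rr xx : V -> R) :
  (forall c, c != root -> 0 <= rr c) -> (forall c, c != root -> 0 <= xx c) ->
  (forall c, 0 <= t c) \/ (forall c, t c <= 0) ->
  (forall c, t' c = 0 \/ t' c = t c) ->
  injection_var j (\sum_(c | c != root) t' c * rr c) (\sum_(c | c != root) t' c * xx c) <=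
  injection_var j (\sum_(c | c != root) t c * rr c) (\sum_(c | c != root) t c * xx c).
Proof.
move=> rr0 xx0 Hsg Ht'.
have pos (s s' : V -> R) : (forall c, 0 <= s c) -> (forall c, s' c = 0 \/ s' c = s c) ->
    injection_var j (\sum_(c | c != root) s' c * rr c) (\sum_(c | c != root) s' c * xx c) <=
    injection_var j (\sum_(c | c != root) s c * rr c) (\sum_(c | c != root) s c * xx c).
  move=> s0 Hs'; have term (w : V -> R) c : (forall c, c != root -> 0 <= w c) ->
      c != root -> 0 <= s' c * w c <= s c * w c.
    by move=> w0 Hc; case: (Hs' c) => ->; rewrite ?mul0r ?lexx ?mulr_ge0 ?w0.
  apply: injection_var_le.
  - by apply: sumr_ge0 => c /(term _ c rr0) /andP [].
  - by apply: ler_sum => c /(term _ c rr0) /andP [].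
  - by apply: sumr_ge0 => c /(term _ c xx0) /andP [].
  - by apply: ler_sum => c /(term _ c xx0) /andP [].
case: Hsg => Hs; first exact: pos.
have := pos (fun c => - t c) (fun c => - t' c).
rewrite -[X in _ -> _ -> X <= _]injection_varN -[X in _ -> _ -> _ <= X]injection_varN.
rewrite !(eq_bigr _ (fun c _ => mulNr _ _)) !sumrN !opprK; apply.
  by move=> c; rewrite oppr_ge0.
by move=> c; case: (Ht' c) => ->; [left; rewrite oppr0|right].
Qed.

Lemma shared_resE (rr : V -> V -> R) y j : shared_res e rr y j =
  \sum_(c | c != root) ((c \in ancestors y)%:R * (c \in ancestors j)%:R) * parent_res e rr c.
Proof.
apply: eq_bigr => c _.
by case: (c \in ancestors y); case: (c \in ancestors j); rewrite /= ?mul1r ?mul0r.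
Qed.

(* [path_sign u w j c] is [+1] ([-1]) when the edge from [c] to its parent
   lies on the tree path between [u] and [w], on the side of [u] ([w]), and
   on the path from [j] to the root; it is [0] otherwise. *)
Definition path_sign u w j c : R :=
  ((c \in ancestors u)%:R - (c \in ancestors w)%:R) * (c \in ancestors j)%:R.

Lemma dsens_pE u w j : dsens_p e r u w j =
  \sum_(c | c != root) path_sign u w (lift0 j) c * parent_res e r c.
Proof.
rewrite /dsens_p /sens_p !shared_resE -sumrB.
by apply: eq_bigr => c _; rewrite /path_sign; ring.
Qed.

Lemma dsens_qE u w j : dsens_q e x u w j =
  \sum_(c | c != root) path_sign u w (lift0 j) c * parent_res e x c.
Proof.
rewrite /dsens_q /sens_q !shared_resE -sumrB.
by apply: eq_bigr => c _; rewrite /path_sign; ring.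
Qed.

Lemma path_sign_uniform u w j :
  (forall c, 0 <= path_sign u w j c) \/ (forall c, path_sign u w j c <= 0).
Proof.
case: (boolP [exists c, (c \in ancestors w) && (c \notin ancestors u) && (c \in ancestors j)]).
  move=> /existsP [c' /andP [/andP [Hw' Hu'] Hj']]; right => c; rewrite /path_sign.
  case Hu: (c \in ancestors u); case Hw: (c \in ancestors w); case Hj: (c \in ancestors j);
    rewrite /= ?subrr ?subr0 ?sub0r ?mulr0 ?mulr1 ?oppr_le0 ?ler01 ?lexx //.
  case: (ancestors_total e_tree Hj Hj') => H.
    by move: Hw; rewrite (ancestors_trans e_tree H Hw').
  by move: Hu'; rewrite (ancestors_trans e_tree H (idP Hu)).
move=> Hn; left => c; rewrite /path_sign.
case Hu: (c \in ancestors u); case Hw: (c \in ancestors w); case Hj: (c \in ancestors j);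
  rewrite /= ?subrr ?subr0 ?sub0r ?mulr0 ?mulr1 ?oppr_ge0 ?ler01 ?lexx //.
by move: Hn; rewrite negb_exists => /forallP /(_ c); rewrite Hu Hw Hj.
Qed.

Lemma path_sign_on_path z u w j c : on_path e z u w ->
  path_sign z w j c = 0 \/ path_sign z w j c = path_sign u w j c.
Proof.
move=> /andP [/fintype.subsetP /(_ c) H1 /fintype.subsetP /(_ c) H2].
move: H1 H2; rewrite /path_sign finset.in_setU finset.in_setI.
case: (c \in ancestors z); case: (c \in ancestors u); case: (c \in ancestors w);
  case: (c \in ancestors j); rewrite /= ?subrr ?mul0r ?mulr0;
  by [left|right|move=> /(_ isT)|move=> _ /(_ isT)].
Qed.

Lemma parent_res_ge0 (rr : V -> V -> R) : (forall u v, e u v -> 0 < rr u v) ->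
  forall c, c != root -> 0 <= parent_res e rr c.
Proof. by move=> rr_gt0 c Hc; rewrite ltW // rr_gt0 // parent_edge. Qed.

Lemma phiR_on_path_le z u w : on_path e z u w -> phiR z w <= phiR u w.
Proof.
move=> Hz; apply: ler_sum => j _; rewrite !dsens_pE !dsens_qE.
apply: injection_var_sum_le.
- exact: parent_res_ge0.
- exact: parent_res_ge0.
- exact: path_sign_uniform.
- by move=> c; apply: path_sign_on_path.
Qed.

Lemma phiR_sym u w : phiR u w = phiR w u.
Proof.
apply: eq_bigr => j _; rewrite -injection_varN /dsens_p /dsens_q.
by rewrite !opprB.
Qed.

(* Two siblings have disjoint root paths below their common parent, so the
   voltage drops along the two parent edges are driven by disjoint injections. *)
Lemma phiR_siblings ci cj : ci != root -> cj != root ->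
  parent e ci = parent e cj -> ci != cj ->
  phiR ci cj = phiR ci (parent e ci) + phiR (parent e ci) cj.
Proof.
move=> Hi Hj Hpij Hij; set b := parent e ci.
have Hpi : parent e ci = b by [].
have Hpj : parent e cj = b by rewrite -Hpij.
rewrite /phiR -big_split; apply: eq_bigr => j _ /=.
set J := lift0 j.
have child (rr : V -> V -> R) y : y != root -> parent e y = b ->
    shared_res e rr y J - shared_res e rr b J =
    if y \in ancestors J then parent_res e rr y else 0.
  by move=> Hy <-; apply: shared_res_parent.
have split (rr : V -> V -> R) :
    shared_res e rr ci J - shared_res e rr cj J =
    (shared_res e rr ci J - shared_res e rr b J) -
    (shared_res e rr cj J - shared_res e rr b J) by ring.
rewrite /dsens_p /dsens_q /sens_p /sens_q -/J !split -!(opprB (shared_res _ _ cj J)).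
rewrite !child //.
case Hci : (ci \in ancestors J); last by rewrite /injection_var; ring.
case Hcj : (cj \in ancestors J); last by rewrite /injection_var; ring.
have HD : depth e ci = depth e cj.
  by rewrite (depth_parent e_tree Hi) (depth_parent e_tree Hj) Hpi Hpj.
by move: Hij; rewrite (ancestors_depth_inj e_tree HD Hci Hcj) eqxx.
Qed.

End Monotonicity.

Section MissingNode.
Variables (R : realDomainType) (n : nat) (e : rel 'I_n.+1).
Local Notation V := 'I_n.+1.
Local Notation root := (@substation n).
Hypothesis e_tree : is_tree_on [set: V] e.
Local Notation ancestors := (ancestors e).
Local Notation parent := (parent e).
Variable w : V -> V -> R.
Hypothesis w_sym : forall u v, w u v = w v u.
Hypothesis w_on_path : forall z u v, on_path e z u v -> w z v <= w u v.
Hypothesis w_siblings : forall ci cj, ci != root -> cj != root ->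
  parent ci = parent cj -> ci != cj -> w ci cj = w ci (parent ci) + w (parent ci) cj.
Variables (S : {set V}) (T : rel V).
Hypothesis T_tree : is_tree_on S T.
Hypothesis T_unique_min :
  forall T', is_tree_on S T' -> weight w T' <= weight w T -> T' =2 T.
Variables (a b cstar : V).
Hypothesis b_notin : b \notin S.
Hypothesis b_neighbors : forall y, e b y -> y \in S.
Hypothesis b_nonroot : b != root.
Hypothesis a_parent : parent b = a.
Hypothesis cstar_child : cstar \in children e b.
Hypothesis cstar_min : forall c, c \in children e b -> w b cstar <= w b c.

Lemma childP c : c \in children e b -> c != root /\ parent c = b.
Proof. by rewrite (childrenE e_tree) => /andP [-> /eqP]. Qed.

Lemma child_in c : c \in children e b -> c \in S.
Proof.
move=> /childP [Hc Hpc]; apply: b_neighbors.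
by rewrite -Hpc tree_sym // parent_edge.
Qed.

Lemma parent_in : a \in S.
Proof. by rewrite -a_parent b_neighbors // parent_edge. Qed.

Lemma siblings_not_ancestors ci cj : ci \in children e b -> cj \in children e b ->
  ci != cj -> ci \notin ancestors cj.
Proof.
move=> /childP [Hi Hpi] /childP [Hj Hpj].
by apply: sibling_notin_ancestors; rewrite // Hpi Hpj.
Qed.

Lemma w_siblings_parent ci cj : ci \in children e b -> cj \in children e b ->
  ci != cj -> w ci cj = w ci b + w b cj.
Proof.
move=> Hi Hj Hij; have [Hir Hpi] := childP Hi; have [Hjr Hpj] := childP Hj.
have Hp : parent ci = parent cj by rewrite Hpi Hpj.
by rewrite w_siblings // Hpi.
Qed.

Lemma w_cstar_le ci cj : ci \in children e b -> cj \in children e b ->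
  ci != cj -> w ci cstar <= w ci cj.
Proof.
move=> Hi Hj Hij.
case: (eqVneq cj cstar) => [->//|Hjs].
case: (eqVneq ci cstar) => [->|His].
  by rewrite [w cstar cj]w_sym w_on_path // on_path_r.
rewrite (w_siblings_parent Hi cstar_child) // (w_siblings_parent Hi Hj) //.
by rewrite lerD2l cstar_min.
Qed.

Section Crossing.
Variables (ci u v : V).
Hypothesis ci_child : ci \in children e b.
Hypothesis u_below : ci \in ancestors u.
Hypothesis v_not_below : ci \notin ancestors v.
Hypothesis v_in : v \in S.

Lemma crossing_outside : b \notin ancestors v -> w ci a <= w u v.
Proof.
move=> Hbv; have [Hir Hpi] := childP ci_child.
have Hbci : b \in ancestors ci by rewrite -Hpi parent_ancestor.
have Hcv : w ci v <= w u v by rewrite w_on_path // ancestor_on_path.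
have Hav : w a ci <= w v ci.
  by rewrite -a_parent w_on_path // parent_on_path.
by rewrite w_sym (le_trans Hav) // w_sym.
Qed.

Lemma crossing_sibling : b \in ancestors v ->
  exists2 cj, cj \in children e b & (cj != ci) && (w ci cj <= w u v).
Proof.
move=> Hbv; have Hvb : b != v by apply: contraNneq b_notin => ->.
have [cj [Hjr Hjp HjA]] := ancestor_child e_tree Hbv Hvb.
have Hj : cj \in children e b by rewrite (childrenE e_tree) Hjr Hjp eqxx.
have Hji : cj != ci by apply: contraNneq v_not_below => <-.
exists cj => //; rewrite Hji /=.
have Hcv : w ci v <= w u v by rewrite w_on_path // ancestor_on_path.
have Hjv : w cj ci <= w v ci.
  by rewrite w_on_path // ancestor_on_path // siblings_not_ancestors.
by rewrite w_sym (le_trans Hjv) // w_sym.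
Qed.

End Crossing.

Lemma mst_no_sibling_edge ci cj :
  ci \in children e b :\ cstar -> cj \in children e b :\ cstar -> ~~ T ci cj.
Proof.
rewrite !finset.in_setD1 => /andP [His Hi] /andP [Hjs Hj].
apply/negP => Tij; have Hij := tree_on_neq T_tree Tij.
apply: (unique_mst_cycle w_sym T_tree T_unique_min Tij (child_in cstar_child)).
- by rewrite eq_sym.
- by rewrite eq_sym.
- exact: w_cstar_le.
- have Hsj : cstar != cj by rewrite eq_sym.
  rewrite (w_siblings_parent cstar_child Hj) // (w_siblings_parent Hi Hj) // lerD2r.
  by rewrite w_sym [w ci b]w_sym cstar_min.
Qed.

Lemma mst_child_parent_edge ci : ci \in children e b -> w a ci < w cstar ci -> T ci a.
Proof.
move=> Hi Hlt; have [Hir Hpi] := childP Hi.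
apply: (unique_mst_cut w_sym T_tree T_unique_min (X := [pred y | ci \in ancestors y])).
- exact: ancestors_self.
- rewrite /= notin_ancestors_depth // (depth_parent e_tree Hir) Hpi.
  by rewrite (depth_parent e_tree b_nonroot) a_parent ltnS leqnSn.
- exact: child_in.
- exact: parent_in.
move=> u v _ Hv /= Hu Hnv.
case: (boolP (b \in ancestors v)) => Hbv; last exact: crossing_outside.
have [cj Hj /andP [Hji Hle]] := crossing_sibling Hi Hu Hnv Hv Hbv.
apply: le_trans Hle; apply: le_trans (w_cstar_le Hi Hj _); last by rewrite eq_sym.
by rewrite w_sym [w ci cstar]w_sym ltW.
Qed.

Lemma mst_child_cstar_edge ci : ci \in children e b -> ci != cstar ->
  w cstar ci <= w a ci -> T ci cstar.
Proof.
move=> Hi His Hle.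
apply: (unique_mst_cut w_sym T_tree T_unique_min (X := [pred y | ci \in ancestors y])).
- exact: ancestors_self.
- exact: siblings_not_ancestors.
- exact: child_in.
- exact: child_in.
move=> u v _ Hv /= Hu Hnv.
case: (boolP (b \in ancestors v)) => Hbv.
  have [cj Hj /andP [Hji Hcj]] := crossing_sibling Hi Hu Hnv Hv Hbv.
  by apply: le_trans Hcj; apply: w_cstar_le; rewrite // eq_sym.
by rewrite w_sym (le_trans Hle) // w_sym crossing_outside.
Qed.

End MissingNode.

Theorem theorem5 (d : measure_display) (Tm : measurableType d) (R : realType)
  (P : probability Tm R) (n : nat)
  (e : rel 'I_n.+1) (r x : 'I_n.+1 -> 'I_n.+1 -> R)
  (p q : 'I_n -> Tm -> R) (v0 : R)
  (M : {set 'I_n.+1}) (TM : rel 'I_n.+1) (a b cstar : 'I_n.+1) :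
  (* tree with substation of degree one, positive symmetric line parameters *)
  is_tree_on [set: 'I_n.+1]%SET e ->
  deg e substation = 1%N ->
  (forall u w, e u w -> 0 < r u w /\ 0 < x u w /\ r u w = r w u /\ x u w = x w u) ->
  (* random injections (measurable, finite second moments) *)
  (forall i, p i \in Lfun P 2%:E) ->
  (forall i, q i \in Lfun P 2%:E) ->
  (* covariance assumption *)
  (forall i j, i != j -> covariance P (p i) (p j) = 0%E) ->
  (forall i j, i != j -> covariance P (q i) (q j) = 0%E) ->
  (forall i j, i != j -> covariance P (q i) (p j) = 0%E) ->
  (forall i, (0 <= covariance P (q i) (p i))%E) ->
  (forall i, (0 < 'V_P[p i] + 'V_P[q i])%E) ->
  (* missing nodes *)
  substation \notin M ->
  (forall m, m \in M -> (2 < deg e m)%N) ->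
  (forall m m', m \in M -> m' \in M -> m != m' -> m' \notin hopball e 2 m) ->
  (* T_M is the minimum weight spanning tree on O = V \ M w.r.t. phi *)
  is_MST (~: M) (phi P e r x p q v0) TM ->
  (forall T', is_MST (~: M) (phi P e r x p q v0) T' ->
     T' =2 TM) ->
  let ph := phi P e r x p q v0 in
  b \in M ->
  is_parent e a b ->
  cstar \in children e b ->
  (forall c, c \in children e b -> (ph b cstar <= ph b c)%E) ->
  (* (i) *)
  (forall ci cj, ci \in children e b :\ cstar -> cj \in children e b :\ cstar ->
     ~~ TM ci cj) /\
  (* (ii) *)
  (forall ci, ci \in children e b -> (ph a ci < ph cstar ci)%E -> TM ci a) /\
  (forall ci, ci \in children e b -> ci != cstar -> ~ (ph a ci < ph cstar ci)%E ->
     TM ci cstar).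
Proof.
move=> e_tree _ rx p_L2 q_L2 cov_pp cov_qq cov_qp cov_qp_ge0 _ _ _ M_far TM_MST TM_uniq.
move=> ph b_in ab cstar_child cstar_min.
have r_gt0 u v : e u v -> 0 < r u v by case/rx.
have x_gt0 u v : e u v -> 0 < x u v by case/rx => _ [].
have r_sym u v : e u v -> r u v = r v u by case/rx => _ [_ []].
have x_sym u v : e u v -> x u v = x v u by case/rx => _ [_ []].
have r_neq0 u v (uv : e u v) : r u v != 0 := lt0r_neq0 (r_gt0 u v uv).
have x_neq0 u v (uv : e u v) : x u v != 0 := lt0r_neq0 (x_gt0 u v uv).
pose w := phiR P e r x p q.
have Eph : phi P e r x p q v0 = fun u v => (w u v)%:E.
  by apply/funext => u; apply/funext => v; rewrite phiE.
rewrite {}/ph {}Eph in TM_MST TM_uniq cstar_min *.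
have w_sym u v : w u v = w v u by apply: phiR_sym.
have w_on_path z u v : on_path e z u v -> w z v <= w u v by apply: phiR_on_path_le.
have w_siblings := phiR_siblings P r x p q e_tree.
have T_unique := unique_MST_weight TM_MST TM_uniq.
have [TM_tree _] := TM_MST.
move: ab; rewrite (is_parentE e_tree) => /andP [b_nonroot /eqP a_parent].
have b_out : b \notin ~: M by rewrite finset.in_setC negbK.
have b_neighbors y : e b y -> y \in ~: M.
  move=> Hy; rewrite finset.in_setC; apply: contraL (edge_hopball 1 Hy) => y_in.
  exact: M_far b y b_in y_in (tree_on_neq e_tree Hy).
split; [|split].
- by apply: (mst_no_sibling_edge e_tree w_sym w_on_path w_siblings TM_tree T_unique).
- move=> ci Hci; rewrite lte_fin.
  by apply: (mst_child_parent_edge e_tree w_sym w_on_path w_siblings TM_tree T_unique b_out).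
- move=> ci Hci Hne /negP; rewrite lte_fin -leNgt.
  by apply: (mst_child_cstar_edge e_tree w_sym w_on_path w_siblings TM_tree T_unique b_out).
Qed.
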